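(* Consider the qubit generator families $$\mathcal L^{(1)}_t[\rho]=\gamma_1(t)\,(\sigma_x\rho\sigma_x-\rho),\qquad \mathcal L^{(2)}_t[\rho]=\gamma_2(t)\Big(\sigma_-\rho\sigma_+-\tfrac12\{\sigma_+\sigma_-,\rho\}\Big),$$ with $\sigma_\pm=(\sigma_x\pm\mathrm i\sigma_y)/2$. (a) If $\gamma_1(t)=\sin(2t)$ and $\gamma_2(t)=1$, then each of $\mathcal L^{(1)}$, $\mathcal L^{(2)}$ individually generates SSC dynamics consisting of CPTP maps for all $t\ge0$, but the family $\Lambda_t$ solving $\dot\Lambda_t=(\mathcal L^{(1)}_t+\mathcal L^{(2)}_t)\circ\Lambda_t$, $\Lambda_0=\mathrm{id}$, contains a map that is not completely positive (in particular $\Lambda_\pi$ is not completely positive). (b) If $\gamma_1(t)=1/2$ and $\gamma_2(t)=\sin t$, then again each of $\mathcal L^{(1)}$, $\mathcal L^{(2)}$ individually generates SSC dynamics consisting of CPTP maps for all $t\ge0$, but the map $\Lambda_{2\pi}$ generated by $\mathcal L^{(1)}_t+\mathcal L^{(2)}_t$ is not completely positive.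
   Context: $\sigma_x,\sigma_y,\sigma_z$ are the Pauli matrices. A family of generators $\mathcal L_t$ generates the maps $\Lambda_t$ solving $\dot\Lambda_t=\mathcal L_t\circ\Lambda_t$ with $\Lambda_0$ the identity. For a commutative family ($[\mathcal L_s,\mathcal L_t]=0$) one has $\Lambda_t=\exp(\mathcal Z_t)$ with $\mathcal Z_t=\int_0^t\mathcal L_\tau d\tau$; the dynamics is SSC (semigroup-simulable and commutative) if, in addition, each $\mathcal Z_t$ is of GKSL form, i.e. $\mathcal Z_t[\rho]=-\mathrm i[H,\rho]+\sum_{i,j}\mathsf D_{ij}(F_i\rho F_j^\dagger-\frac12\{F_j^\dagger F_i,\rho\})$ with $\mathsf D\ge0$ in an orthonormal traceless operator basis $\{F_i\}$. *)

From Stdlib Require Import Reals.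
Open Scope R_scope.

Record C := mkC { Re : R; Im : R }.
Definition C0 : C := mkC 0 0.
Definition C1 : C := mkC 1 0.
Definition Ci : C := mkC 0 1.
Definition RtoC (x : R) : C := mkC x 0.
Definition Cadd (z w : C) : C := mkC (Re z + Re w) (Im z + Im w).
Definition Copp (z : C) : C := mkC (- Re z) (- Im z).
Definition Csub (z w : C) : C := Cadd z (Copp w).
Definition Cmul (z w : C) : C :=
  mkC (Re z * Re w - Im z * Im w) (Re z * Im w + Im z * Re w).
Definition Cconj (z : C) : C := mkC (Re z) (- Im z).

Fixpoint Csum (n : nat) (f : nat -> C) : C :=
  match n with O => C0 | S m => Cadd (Csum m f) (f m) end.
(* sum over a qubit index; false = |0>, true = |1> *)
Definition Bsum (f : bool -> C) : C := Cadd (f false) (f true).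

Definition M2 := bool -> bool -> C.
Definition Madd (A B : M2) : M2 := fun a b => Cadd (A a b) (B a b).
Definition Msub (A B : M2) : M2 := fun a b => Csub (A a b) (B a b).
Definition Mscale (z : C) (A : M2) : M2 := fun a b => Cmul z (A a b).
Definition Mmul (A B : M2) : M2 := fun a b => Bsum (fun c => Cmul (A a c) (B c b)).
Definition Mdag (A : M2) : M2 := fun a b => Cconj (A b a).
Definition Mtr (A : M2) : C := Bsum (fun a => A a a).
Definition Mzero : M2 := fun _ _ => C0.
Definition Mid : M2 := fun a b => if Bool.eqb a b then C1 else C0.
Definition comm (A B : M2) : M2 := Msub (Mmul A B) (Mmul B A).
Definition acomm (A B : M2) : M2 := Madd (Mmul A B) (Mmul B A).

Definition sx : M2 := fun a b => if Bool.eqb a b then C0 else C1.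
Definition sy : M2 := fun a b =>
  match a, b with false, true => Copp Ci | true, false => Ci | _, _ => C0 end.
Definition sz : M2 := fun a b =>
  match a, b with false, false => C1 | true, true => Copp C1 | _, _ => C0 end.
Definition splus : M2 := Mscale (RtoC (/2)) (Madd sx (Mscale Ci sy)).
Definition sminus : M2 := Mscale (RtoC (/2)) (Msub sx (Mscale Ci sy)).

Definition Sop := bool -> bool -> bool -> bool -> C.
Definition apply (S : Sop) (rho : M2) : M2 :=
  fun a b => Bsum (fun c => Bsum (fun d => Cmul (S a b c d) (rho c d))).
Definition Eunit (c d : bool) : M2 :=
  fun a b => if andb (Bool.eqb a c) (Bool.eqb b d) then C1 else C0.
Definition sop_of (f : M2 -> M2) : Sop := fun a b c d => f (Eunit c d) a b.
Definition Scomp (S T : Sop) : Sop :=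
  fun a b c d => Bsum (fun e => Bsum (fun f => Cmul (S a b e f) (T e f c d))).
Definition Sid : Sop := sop_of (fun rho => rho).
Definition Sadd (S T : Sop) : Sop := fun a b c d => Cadd (S a b c d) (T a b c d).

(* an operator on C^n (x) C^2, given as an n x n array of 2x2 blocks X i j *)
Definition blockPSD (n : nat) (X : nat -> nat -> M2) : Prop :=
  forall v : nat -> bool -> C,
    let q := Csum n (fun i => Csum n (fun j => Bsum (fun a => Bsum (fun b =>
               Cmul (Cconj (v i a)) (Cmul (X i j a b) (v j b)))))) in
    Im q = 0 /\ 0 <= Re q.
(* completely positive: id_n (x) S is positive for every n *)
Definition CP (S : Sop) : Prop :=
  forall (n : nat) (X : nat -> nat -> M2),
    blockPSD n X -> blockPSD n (fun i j => apply S (X i j)).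
Definition TP (S : Sop) : Prop := forall rho : M2, Mtr (apply S rho) = Mtr rho.
Definition CPTP (S : Sop) : Prop := CP S /\ TP S.

Definition Cderiv (f : R -> C) (t : R) (z : C) : Prop :=
  derivable_pt_lim (fun s => Re (f s)) t (Re z) /\
  derivable_pt_lim (fun s => Im (f s)) t (Im z).
Definition Cintegral (f : R -> C) (a b : R) (z : C) : Prop :=
  (exists pr : Riemann_integrable (fun s => Re (f s)) a b, RiemannInt pr = Re z) /\
  (exists pr : Riemann_integrable (fun s => Im (f s)) a b, RiemannInt pr = Im z).

Definition solves (L : R -> Sop) (Lam : R -> Sop) : Prop :=
  (forall a b c d, Lam 0 a b c d = Sid a b c d) /\
  (forall t a b c d, Cderiv (fun s => Lam s a b c d) t (Scomp (L t) (Lam t) a b c d)).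

Definition hermitian (H : M2) : Prop := forall a b, H a b = Cconj (H b a).
Definition Kdelta (i j : nat) : C := if Nat.eqb i j then C1 else C0.
Definition GKSL (Z : Sop) : Prop :=
  exists (H : M2) (F : nat -> M2) (D : nat -> nat -> C),
    hermitian H /\
    (forall i, (i < 3)%nat -> Mtr (F i) = C0) /\
    (forall i j, (i < 3)%nat -> (j < 3)%nat -> Mtr (Mmul (Mdag (F i)) (F j)) = Kdelta i j) /\
    (forall v : nat -> C,
       let q := Csum 3 (fun i => Csum 3 (fun j =>
                  Cmul (Cconj (v i)) (Cmul (D i j) (v j)))) in
       Im q = 0 /\ 0 <= Re q) /\
    (forall rho : M2,
       apply Z rho =
       Madd (Mscale (Copp Ci) (comm H rho))
         (fun a b => Csum 3 (fun i => Csum 3 (fun j =>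
            Mscale (D i j)
              (Msub (Mmul (Mmul (F i) rho) (Mdag (F j)))
                    (Mscale (RtoC (/2)) (acomm (Mmul (Mdag (F j)) (F i)) rho))) a b)))).

Definition SSC (L : R -> Sop) : Prop :=
  (forall s t, 0 <= s -> 0 <= t -> forall a b c d,
      Scomp (L s) (L t) a b c d = Scomp (L t) (L s) a b c d) /\
  (forall t, 0 <= t -> exists Z : Sop,
      (forall a b c d, Cintegral (fun tau => L tau a b c d) 0 t (Z a b c d)) /\
      GKSL Z).

Definition SSC_CPTP (L : R -> Sop) : Prop :=
  SSC L /\ (exists Lam, solves L Lam) /\
  (forall Lam, solves L Lam -> forall t, 0 <= t -> CPTP (Lam t)).

Definition L1 (g : R -> R) (t : R) : Sop :=
  sop_of (fun rho => Mscale (RtoC (g t)) (Msub (Mmul (Mmul sx rho) sx) rho)).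
Definition L2 (g : R -> R) (t : R) : Sop :=
  sop_of (fun rho => Mscale (RtoC (g t))
    (Msub (Mmul (Mmul sminus rho) splus)
          (Mscale (RtoC (/2)) (acomm (Mmul splus sminus) rho)))).
Definition Lsum (L L' : R -> Sop) (t : R) : Sop := Sadd (L t) (L' t).

(* Each generator is a real scalar multiple [g t * k] of a fixed superoperator [k].  Such a
   family is solved by [Lam t = exp (G t * k)] with [G] an antiderivative of [g] (uniqueness:
   [exp (- G t * k) Lam t] has zero derivative); when [G t >= 0] this exponential is a positive
   combination of two Kraus maps, hence CPTP, and [G t * k] is in GKSL form with a rank-one
   GKSL matrix.
   For the sum, the evolution is solved once (populations by variation of constants, the
   coherences as two independently decaying modes), and non-complete-positivity is read off any
   solution from the scalar ODEs of a few of its entries: in (a) the population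
   [<0| Lam_PI (|0><0|) |0>] becomes negative; in (b) the Choi matrix of [Lam_2PI] contains the
   block [[p, (p + r)/2], [(p + r)/2, r]] with [p <> r], which is indefinite. *)

From Stdlib Require Import Reals Lra Lia FunctionalExtensionality.
From Coquelicot Require Import Hierarchy Derive RInt RInt_analysis Continuity AutoDerive.
Open Scope R_scope.

Lemma C_ext z w : Re z = Re w -> Im z = Im w -> z = w.
Proof. destruct z, w; simpl; intros -> ->; reflexivity. Qed.

Lemma Sop_ext (S T : Sop) : (forall a b c d, S a b c d = T a b c d) -> S = T.
Proof. intro H. do 4 (apply functional_extensionality; intro). apply H. Qed.

Ltac unfold_qubit :=
  cbv [L1 L2 Lsum sop_of Mscale Msub Madd Mmul Mdag Mtr Bsum Eunit sx sy splus sminus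
       acomm comm Cmul Cadd Csub Copp Cconj RtoC C0 C1 Ci Scomp Sid Sadd apply Mzero
       Csum Bool.eqb andb negb Nat.eqb];
  cbn [Re Im].

Definition bR (b : bool) : R := if b then 1 else 0.

Definition Rtab := bool -> bool -> bool -> bool -> R.
Definition toS (T : Rtab) : Sop := fun a b c d => RtoC (T a b c d).
Definition sum2 (f : bool -> bool -> R) : R :=
  f false false + f false true + f true false + f true true.
Definition Rcomp (A B : Rtab) : Rtab := fun a b c d => sum2 (fun e f => A a b e f * B e f c d).
Definition idT : Rtab := fun a b c d => bR (Bool.eqb a c && Bool.eqb b d).
Definition flipT : Rtab := fun a b c d => bR (Bool.eqb a (negb c) && Bool.eqb b (negb d)).
Definition scaleT (x : R) (T : Rtab) : Rtab := fun a b c d => x * T a b c d.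
Definition addT (A B : Rtab) : Rtab := fun a b c d => A a b c d + B a b c d.

Definition k1 : Rtab := fun a b c d => flipT a b c d - idT a b c d.
(* [sminus] is the matrix unit [|1><0|]: the damping is towards [|1>]. *)
Definition k2 : Rtab := fun a b c d =>
  match a, b, c, d with
  | false, false, false, false => -1
  | true, true, false, false => 1
  | false, true, false, true => - / 2
  | true, false, true, false => - / 2
  | _, _, _, _ => 0 end.

Lemma sum2_idT_l a b (z : bool -> bool -> R) : sum2 (fun e f => idT a b e f * z e f) = z a b.
Proof. destruct a, b; unfold sum2, idT, bR; simpl; ring. Qed.

Lemma sum2_idT_r c d (z : bool -> bool -> R) : sum2 (fun e f => z e f * idT e f c d) = z c d.
Proof. destruct c, d; unfold sum2, idT, bR; simpl; ring. Qed.

Lemma Sid_toS : Sid = toS idT.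
Proof.
  apply Sop_ext; intros [|] [|] [|] [|]; unfold_qubit; unfold toS, idT, bR, RtoC;
    apply C_ext; simpl; ring.
Qed.

Lemma L1_toS g t : L1 g t = toS (scaleT (g t) k1).
Proof.
  apply Sop_ext; intros [|] [|] [|] [|]; unfold_qubit; apply C_ext;
    cbv [scaleT k1 flipT idT bR toS RtoC Bool.eqb andb negb]; simpl; ring.
Qed.

Lemma sminus_unit : sminus = fun a b => RtoC (bR (a && negb b)).
Proof.
  do 2 (apply functional_extensionality; intros [|]); unfold_qubit; apply C_ext; simpl; field.
Qed.

Lemma splus_unit : splus = fun a b => RtoC (bR (negb a && b)).
Proof.
  do 2 (apply functional_extensionality; intros [|]); unfold_qubit; apply C_ext; simpl; field.
Qed.

Lemma L2_toS g t : L2 g t = toS (scaleT (g t) k2).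
Proof.
  unfold L2; rewrite sminus_unit, splus_unit.
  apply Sop_ext; intros [|] [|] [|] [|]; unfold_qubit; apply C_ext;
    cbv [scaleT k2 toS RtoC bR andb negb]; cbn [Re Im]; lra.
Qed.

Lemma Lsum_toS (l l' : R -> Rtab) t :
  Lsum (fun s => toS (l s)) (fun s => toS (l' s)) t = toS (addT (l t) (l' t)).
Proof. apply Sop_ext; intros; unfold_qubit; unfold toS, addT; apply C_ext; simpl; ring. Qed.

Lemma Scomp_toS A B : Scomp (toS A) (toS B) = toS (Rcomp A B).
Proof. apply Sop_ext; intros; unfold_qubit; unfold toS, Rcomp, sum2; apply C_ext; simpl; ring. Qed.

Lemma L1_fun g : L1 g = fun t => toS (scaleT (g t) k1).
Proof. apply functional_extensionality, L1_toS. Qed.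

Lemma L2_fun g : L2 g = fun t => toS (scaleT (g t) k2).
Proof. apply functional_extensionality, L2_toS. Qed.

Lemma Lsum_L1_L2 g1 g2 :
  Lsum (L1 g1) (L2 g2) = fun t => toS (addT (scaleT (g1 t) k1) (scaleT (g2 t) k2)).
Proof.
  rewrite L1_fun, L2_fun. apply functional_extensionality; intro t. apply Lsum_toS.
Qed.

Lemma derivable_pt_lim_replace f x l l' :
  derivable_pt_lim f x l -> l = l' -> derivable_pt_lim f x l'.
Proof. intros H ->; exact H. Qed.

Lemma derivable_pt_lim_mul f g x a b :
  derivable_pt_lim f x a -> derivable_pt_lim g x b ->
  derivable_pt_lim (fun t => f t * g t) x (a * g x + f x * b).
Proof. apply derivable_pt_lim_mult. Qed.

Lemma derivable_pt_lim_compose (F h : R -> R) x a b :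
  derivable_pt_lim h x a -> derivable_pt_lim F (h x) b ->
  derivable_pt_lim (fun t => F (h t)) x (b * a).
Proof. intros. apply (derivable_pt_lim_comp h F); auto. Qed.

Lemma derivable_pt_lim_exp_opp (f : R -> R) x l :
  derivable_pt_lim f x l -> derivable_pt_lim (fun t => exp (- f t)) x (- l * exp (- f x)).
Proof.
  intro H. eapply derivable_pt_lim_replace.
  - apply (derivable_pt_lim_compose exp (fun t => - f t));
      [apply derivable_pt_lim_opp, H | apply derivable_pt_lim_exp].
  - ring.
Qed.

Lemma derivable_pt_lim_sum2_mul (u v : R -> bool -> bool -> R) (u' v' : bool -> bool -> R) x :
  (forall e f, derivable_pt_lim (fun t => u t e f) x (u' e f)) ->
  (forall e f, derivable_pt_lim (fun t => v t e f) x (v' e f)) ->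
  derivable_pt_lim (fun t => sum2 (fun e f => u t e f * v t e f)) x
    (sum2 (fun e f => u' e f * v x e f + u x e f * v' e f)).
Proof.
  intros Hu Hv; unfold sum2.
  repeat apply derivable_pt_lim_plus; apply derivable_pt_lim_mul; auto.
Qed.

Lemma continuity_pt_of_derivable (F f : R -> R) x :
  (forall y, derivable_pt_lim F y (f y)) -> continuity_pt F x.
Proof. intro H. apply derivable_continuous_pt. exists (f x). apply H. Qed.

Lemma continuity_pt_cst (c x : R) : continuity_pt (fun _ => c) x.
Proof. apply continuity_pt_const. intros u v; reflexivity. Qed.

Lemma MVT_lim (f f' : R -> R) a b :
  (forall x, derivable_pt_lim f x (f' x)) -> a < b ->
  exists c, a < c < b /\ f b - f a = f' c * (b - a).
Proof.
  intros H Hab.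
  destruct (MVT_cor1 f a b (fun x => exist _ (f' x) (H x)) Hab) as [c [Hc1 Hc2]].
  exists c; split; auto.
Qed.

Lemma derivable_pt_lim_0_const (f : R -> R) :
  (forall x, derivable_pt_lim f x 0) -> forall t, f t = f 0.
Proof.
  intros H t. destruct (Rtotal_order 0 t) as [h|[<-|h]]; [| reflexivity |].
  - destruct (MVT_lim f (fun _ => 0) 0 t H h) as [c [_ Hc]]. lra.
  - destruct (MVT_lim f (fun _ => 0) t 0 H h) as [c [_ Hc]]. lra.
Qed.

Lemma derivable_pt_lim_nonpos_decreasing (f f' : R -> R) a b :
  (forall x, derivable_pt_lim f x (f' x)) -> (forall x, a <= x <= b -> f' x <= 0) ->
  a <= b -> f b <= f a.
Proof.
  intros H Hn Hab. destruct (Req_dec a b) as [->|hne]; [lra|].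
  destruct (MVT_lim f f' a b H) as [c [Hc1 Hc2]]; [lra|].
  assert (f' c <= 0) by (apply Hn; lra). nra.
Qed.

Lemma derivable_pt_lim_pos_increasing (f f' : R -> R) a b :
  (forall x, derivable_pt_lim f x (f' x)) -> (forall x, a < x < b -> 0 < f' x) ->
  a < b -> f a < f b.
Proof.
  intros H Hp Hab. destruct (MVT_lim f f' a b H Hab) as [c [Hc1 Hc2]].
  assert (0 < f' c) by (apply Hp; lra). nra.
Qed.

Lemma integrating_factor (f a A : R -> R) :
  (forall t, derivable_pt_lim f t (- a t * f t)) -> (forall t, derivable_pt_lim A t (a t)) ->
  forall t, f t * exp (A t) = f 0 * exp (A 0).
Proof.
  intros Hf HA. apply (derivable_pt_lim_0_const (fun t => f t * exp (A t))). intro x.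
  eapply derivable_pt_lim_replace.
  - apply derivable_pt_lim_mul; [apply Hf|].
    apply (derivable_pt_lim_compose exp A); [apply HA | apply derivable_pt_lim_exp].
  - cbv beta; ring.
Qed.

Lemma RiemannInt_antiderivative (f F : R -> R) t :
  (forall x, derivable_pt_lim F x (f x)) -> (forall x, continuity_pt f x) ->
  exists pr : Riemann_integrable f 0 t, RiemannInt pr = F t - F 0.
Proof.
  intros HF Hc.
  assert (H : is_RInt f 0 t (minus (F t) (F 0))).
  { apply (@is_RInt_derive R_CompleteNormedModule F f).
    - intros x _. apply is_derive_Reals, HF.
    - intros x _. apply continuity_pt_filterlim, Hc. }
  exists (ex_RInt_Reals_0 f 0 t (ex_intro _ _ H)).
  rewrite <- RInt_Reals, (is_RInt_unique _ _ _ _ H). reflexivity.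
Qed.

Lemma solves_toS (l E : R -> Rtab) :
  (forall a b c d, E 0 a b c d = idT a b c d) ->
  (forall t a b c d, derivable_pt_lim (fun s => E s a b c d) t (Rcomp (l t) (E t) a b c d)) ->
  solves (fun t => toS (l t)) (fun t => toS (E t)).
Proof.
  intros H0 HD. split.
  - intros a b c d. rewrite Sid_toS. unfold toS. rewrite H0. reflexivity.
  - intros t a b c d. rewrite Scomp_toS. split; simpl.
    + apply HD.
    + apply derivable_pt_lim_const.
Qed.

Section SolutionComponents.

Variables (l : R -> Rtab) (Lam : R -> Sop).
Hypothesis Lam_solves : solves (fun t => toS (l t)) Lam.

Lemma solves_Re_0 a b c d : Re (Lam 0 a b c d) = idT a b c d.
Proof. destruct Lam_solves as [H0 _]. rewrite H0, Sid_toS. reflexivity. Qed.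

Lemma solves_Im_0 a b c d : Im (Lam 0 a b c d) = 0.
Proof. destruct Lam_solves as [H0 _]. rewrite H0, Sid_toS. reflexivity. Qed.

Lemma solves_Re_deriv t a b c d :
  derivable_pt_lim (fun s => Re (Lam s a b c d)) t
    (sum2 (fun e f => l t a b e f * Re (Lam t e f c d))).
Proof.
  destruct Lam_solves as [_ HD]. eapply derivable_pt_lim_replace; [apply (HD t a b c d)|].
  unfold Scomp, Bsum, Cmul, Cadd, toS, RtoC, sum2; simpl; ring.
Qed.

Lemma solves_Im_deriv t a b c d :
  derivable_pt_lim (fun s => Im (Lam s a b c d)) t
    (sum2 (fun e f => l t a b e f * Im (Lam t e f c d))).
Proof.
  destruct Lam_solves as [_ HD]. eapply derivable_pt_lim_replace; [apply (HD t a b c d)|].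
  unfold Scomp, Bsum, Cmul, Cadd, toS, RtoC, sum2; simpl; ring.
Qed.

End SolutionComponents.

(* [E] plays the role of [x |-> exp (x k)]. *)
Section ScalarFamily.

Variables (k : Rtab) (E : R -> Rtab).
Hypothesis E_0 : forall a b c d, E 0 a b c d = idT a b c d.
Hypothesis E_deriv :
  forall x a b c d, derivable_pt_lim (fun z => E z a b c d) x (Rcomp (E x) k a b c d).
Hypothesis E_comm : forall x a b c d, Rcomp k (E x) a b c d = Rcomp (E x) k a b c d.
Hypothesis E_inv : forall x a b c d, Rcomp (E x) (E (- x)) a b c d = idT a b c d.

Variables (g G : R -> R).
Hypothesis G_deriv : forall t, derivable_pt_lim G t (g t).
Hypothesis G_0 : G 0 = 0.

Let L t := toS (scaleT (g t) k).

Lemma solves_scalar_exp : solves L (fun t => toS (E (G t))).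
Proof.
  apply solves_toS.
  - intros. rewrite G_0. apply E_0.
  - intros t a b c d. eapply derivable_pt_lim_replace.
    + apply (derivable_pt_lim_compose (fun z => E z a b c d) G); [apply G_deriv | apply E_deriv].
    + rewrite <- E_comm. unfold Rcomp, scaleT, sum2. ring.
Qed.

(* [exp (- G t k) y t] has zero derivative. *)
Lemma scalar_ode_unique (y : R -> bool -> bool -> R) :
  (forall t a b, derivable_pt_lim (fun s => y s a b) t
                   (g t * sum2 (fun e f => k a b e f * y t e f))) ->
  forall t a b, y t a b = sum2 (fun e f => E (G t) a b e f * y 0 e f).
Proof.
  intros Hy.
  set (w := fun t a b => sum2 (fun e f => E (- G t) a b e f * y t e f)).
  assert (Hw : forall a b t, w t a b = w 0 a b).
  { intros a b. apply (derivable_pt_lim_0_const (fun t => w t a b)). intro x. unfold w.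
    eapply derivable_pt_lim_replace.
    - apply derivable_pt_lim_sum2_mul with
        (u := fun t e f => E (- G t) a b e f) (v := y)
        (u' := fun e f => Rcomp (E (- G x)) k a b e f * (- g x)).
      + intros e f. apply (derivable_pt_lim_compose (fun z => E z a b e f) (fun t => - G t)).
        * apply derivable_pt_lim_opp, G_deriv.
        * apply E_deriv.
      + intros e f. apply Hy.
    - unfold Rcomp, sum2. ring. }
  assert (Hw0 : forall a b, w 0 a b = y 0 a b).
  { intros a b. unfold w. rewrite G_0, Ropp_0, <- (sum2_idT_l a b (y 0)).
    unfold sum2. rewrite !E_0. reflexivity. }
  intros t a b. rewrite <- (sum2_idT_l a b (y t)).
  transitivity (sum2 (fun e f => Rcomp (E (G t)) (E (- G t)) a b e f * y t e f)).
  { unfold sum2. rewrite !E_inv. reflexivity. }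
  transitivity (sum2 (fun e f => E (G t) a b e f * w t e f)).
  { unfold w, Rcomp, sum2. ring. }
  unfold sum2. rewrite !(Hw _ _ t), !Hw0. reflexivity.
Qed.

Lemma solves_scalar_unique Lam : solves L Lam -> forall t, Lam t = toS (E (G t)).
Proof.
  intros HL t. apply Sop_ext. intros a b c d. apply C_ext; unfold toS, RtoC; simpl.
  - rewrite (scalar_ode_unique (fun s a b => Re (Lam s a b c d))).
    + unfold sum2. rewrite !(solves_Re_0 _ _ HL). apply sum2_idT_r.
    + intros s a' b'. eapply derivable_pt_lim_replace; [apply (solves_Re_deriv _ _ HL)|].
      unfold scaleT, sum2. ring.
  - rewrite (scalar_ode_unique (fun s a b => Im (Lam s a b c d))).
    + unfold sum2. rewrite !(solves_Im_0 _ _ HL). ring.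
    + intros s a' b'. eapply derivable_pt_lim_replace; [apply (solves_Im_deriv _ _ HL)|].
      unfold scaleT, sum2. ring.
Qed.

Hypothesis g_cont : forall x, continuity_pt g x.

Lemma SSC_scalar : (forall x, 0 <= x -> GKSL (toS (scaleT x k))) ->
  (forall t, 0 <= t -> 0 <= G t) -> SSC L.
Proof.
  intros HK HG. split.
  - intros s t _ _ a b c d. unfold L. rewrite !Scomp_toS.
    unfold toS, Rcomp, scaleT, sum2. f_equal. ring.
  - intros t ht. exists (toS (scaleT (G t) k)). split; [|apply HK, HG, ht].
    intros a b c d. split; unfold L, toS, scaleT, RtoC; simpl.
    + destruct (RiemannInt_antiderivative (fun s => g s * k a b c d)
                  (fun s => G s * k a b c d) t) as [pr Hpr].
      * intro x. eapply derivable_pt_lim_replace.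
        -- apply derivable_pt_lim_mul; [apply G_deriv | apply derivable_pt_lim_const].
        -- cbv beta; ring.
      * intro x. apply continuity_pt_mult; [apply g_cont | apply continuity_pt_cst].
      * exists pr. rewrite Hpr, G_0. ring.
    + destruct (RiemannInt_antiderivative (fun _ => 0) (fun _ => 0) t) as [pr Hpr].
      * intro x. apply derivable_pt_lim_const.
      * intro x. apply continuity_pt_cst.
      * exists pr. rewrite Hpr. ring.
Qed.

Lemma SSC_CPTP_scalar :
  (forall x, 0 <= x -> GKSL (toS (scaleT x k))) ->
  (forall x, 0 <= x -> CPTP (toS (E x))) ->
  (forall t, 0 <= t -> 0 <= G t) -> SSC_CPTP L.
Proof.
  intros HK HE HG. split; [|split].
  - apply SSC_scalar; assumption.
  - exists (fun t => toS (E (G t))). apply solves_scalar_exp.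
  - intros Lam HL t ht. rewrite (solves_scalar_unique Lam HL t). apply HE, HG, ht.
Qed.

End ScalarFamily.

Lemma Csum_ext n f g : (forall i, f i = g i) -> Csum n f = Csum n g.
Proof. intro H; induction n; simpl; auto. rewrite IHn, H; auto. Qed.

Lemma Csum_add n f g : Csum n (fun i => Cadd (f i) (g i)) = Cadd (Csum n f) (Csum n g).
Proof. induction n; simpl; [|rewrite IHn]; apply C_ext; simpl; ring. Qed.

Lemma Csum_scale n c f : Csum n (fun i => Cmul (RtoC c) (f i)) = Cmul (RtoC c) (Csum n f).
Proof. induction n; simpl; [|rewrite IHn]; apply C_ext; simpl; ring. Qed.

Section TwoKraus.

Variables (K0 K1 : bool -> bool -> R) (c0 c1 : R).

Let form (X : M2) (u u' : bool -> C) : C :=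
  Bsum (fun a => Bsum (fun b => Cmul (Cconj (u a)) (Cmul (X a b) (u' b)))).
Let pull (K : bool -> bool -> R) (u : bool -> C) : bool -> C :=
  fun c => Bsum (fun a => Cmul (RtoC (K a c)) (u a)).

(* The adjoint map [u |-> K^T u] carries each Kraus term to the block form of [X]. *)
Let form_Kraus X u u' :
  form (apply (fun a b c d => RtoC (c0 * K0 a c * K0 b d + c1 * K1 a c * K1 b d)) X) u u' =
  Cadd (Cmul (RtoC c0) (form X (pull K0 u) (pull K0 u')))
       (Cmul (RtoC c1) (form X (pull K1 u) (pull K1 u'))).
Proof. unfold form, pull, apply, Bsum, Cmul, Cadd, Cconj, RtoC. apply C_ext; simpl; ring. Qed.

Lemma CP_two_real_Kraus (S : Sop) : 0 <= c0 -> 0 <= c1 ->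
  (forall a b c d, S a b c d = RtoC (c0 * K0 a c * K0 b d + c1 * K1 a c * K1 b d)) -> CP S.
Proof.
  intros h0 h1 HS. rewrite (Sop_ext _ _ HS). intros n X HX v. cbv zeta.
  set (q := fun K =>
    Csum n (fun i => Csum n (fun j => form (X i j) (pull K (v i)) (pull K (v j))))).
  assert (H0 : Im (q K0) = 0 /\ 0 <= Re (q K0)) by exact (HX (fun i => pull K0 (v i))).
  assert (H1 : Im (q K1) = 0 /\ 0 <= Re (q K1)) by exact (HX (fun i => pull K1 (v i))).
  match goal with |- context [Csum n ?F] => set (FF := F) end.
  assert (E : Csum n FF = Cadd (Cmul (RtoC c0) (q K0)) (Cmul (RtoC c1) (q K1))).
  { unfold q. rewrite <- !Csum_scale, <- Csum_add. apply Csum_ext; intro i. unfold FF.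
    rewrite <- !Csum_scale, <- Csum_add. apply Csum_ext; intro j. apply form_Kraus. }
  rewrite E. revert H0 H1. generalize (q K0) (q K1).
  intros [x0 y0] [x1 y1]; simpl; intros [-> ?] [-> ?]. split; [ring | nra].
Qed.

End TwoKraus.

Lemma exp_le_1 u : u <= 0 -> exp u <= 1.
Proof.
  intro h. rewrite <- exp_0. destruct (Req_dec u 0) as [->|hn]; [lra|].
  left. apply exp_increasing. lra.
Qed.

(* [exp (x k1)] is the bit-flip channel: [k1 * k1 = - 2 k1]. *)
Definition noflip (x : R) : R := / 2 * (1 + exp (- (2 * x))).
Definition expT1 (x : R) : Rtab := addT (scaleT (noflip x) idT) (scaleT (1 - noflip x) flipT).

Lemma noflip_deriv x : derivable_pt_lim noflip x (- exp (- (2 * x))).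
Proof. unfold noflip. apply is_derive_Reals. auto_derive; [auto | field]. Qed.

Lemma expT1_0 a b c d : expT1 0 a b c d = idT a b c d.
Proof.
  unfold expT1, addT, scaleT, noflip. rewrite Rmult_0_r, Ropp_0, exp_0.
  destruct a, b, c, d; unfold idT, flipT, bR; simpl; field.
Qed.

Lemma expT1_deriv x a b c d :
  derivable_pt_lim (fun z => expT1 z a b c d) x (Rcomp (expT1 x) k1 a b c d).
Proof.
  unfold expT1, addT, scaleT. eapply derivable_pt_lim_replace.
  - apply derivable_pt_lim_plus; apply derivable_pt_lim_mul;
      try apply derivable_pt_lim_const; try apply derivable_pt_lim_minus;
      try apply derivable_pt_lim_const; apply noflip_deriv.
  - unfold Rcomp, sum2, k1, noflip.
    destruct a, b, c, d; unfold idT, flipT, bR; simpl; field.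
Qed.

Lemma expT1_comm x a b c d : Rcomp k1 (expT1 x) a b c d = Rcomp (expT1 x) k1 a b c d.
Proof.
  unfold Rcomp, sum2, k1, expT1, addT, scaleT.
  destruct a, b, c, d; unfold idT, flipT, bR; simpl; ring.
Qed.

Lemma expT1_inv x a b c d : Rcomp (expT1 x) (expT1 (- x)) a b c d = idT a b c d.
Proof.
  unfold Rcomp, sum2, expT1, addT, scaleT, noflip.
  replace (- (2 * - x)) with (- - (2 * x)) by ring. rewrite (exp_Ropp (- (2 * x))).
  assert (h := exp_pos (- (2 * x))).
  destruct a, b, c, d; unfold idT, flipT, bR; simpl; field; lra.
Qed.

Lemma expT1_CPTP x : 0 <= x -> CPTP (toS (expT1 x)).
Proof.
  intro hx. assert (h1 : exp (- (2 * x)) <= 1) by (apply exp_le_1; lra).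
  assert (h2 := exp_pos (- (2 * x))). split.
  - apply (CP_two_real_Kraus (fun a c => bR (Bool.eqb a c)) (fun a c => bR (Bool.eqb a (negb c)))
             (noflip x) (1 - noflip x)); try (unfold noflip; lra).
    intros a b c d. unfold toS, expT1, addT, scaleT.
    destruct a, b, c, d; unfold idT, flipT, bR; simpl; f_equal; ring.
  - intro rho. unfold toS, expT1, addT, scaleT, idT, flipT, bR.
    unfold_qubit. apply C_ext; simpl; ring.
Qed.

(* Populations relax at rate 1, coherences at rate 1/2. *)
Definition decay (x : R) : R := exp (- (x * / 2)).
Definition expT2 (x : R) : Rtab := fun a b c d =>
  match a, b, c, d with
  | false, false, false, false => decay x * decay x
  | true, true, false, false => 1 - decay x * decay x
  | true, true, true, true => 1
  | false, true, false, true => decay x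
  | true, false, true, false => decay x
  | _, _, _, _ => 0 end.

Lemma decay_deriv x : derivable_pt_lim decay x (- / 2 * decay x).
Proof. unfold decay. apply is_derive_Reals. auto_derive; [auto | field]. Qed.

Lemma expT2_0 a b c d : expT2 0 a b c d = idT a b c d.
Proof.
  unfold expT2, decay. rewrite Rmult_0_l, Ropp_0, exp_0.
  destruct a, b, c, d; unfold idT, bR; simpl; ring.
Qed.

Lemma expT2_deriv x a b c d :
  derivable_pt_lim (fun z => expT2 z a b c d) x (Rcomp (expT2 x) k2 a b c d).
Proof.
  unfold Rcomp, sum2, k2, expT2.
  destruct a, b, c, d; simpl; eapply derivable_pt_lim_replace;
    first [ apply derivable_pt_lim_const | apply decay_deriv
          | apply (derivable_pt_lim_mul decay decay); apply decay_deriv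
          | apply derivable_pt_lim_minus;
              [apply derivable_pt_lim_const |
               apply (derivable_pt_lim_mul decay decay); apply decay_deriv]
          | idtac ]; field.
Qed.

Lemma expT2_comm x a b c d : Rcomp k2 (expT2 x) a b c d = Rcomp (expT2 x) k2 a b c d.
Proof. unfold Rcomp, sum2, k2, expT2. destruct a, b, c, d; simpl; field. Qed.

Lemma expT2_inv x a b c d : Rcomp (expT2 x) (expT2 (- x)) a b c d = idT a b c d.
Proof.
  unfold Rcomp, sum2, expT2.
  assert (hinv : decay (- x) = / decay x) by (unfold decay; rewrite <- exp_Ropp; f_equal; ring).
  assert (h := exp_pos (- (x * / 2))). fold (decay x) in h. rewrite hinv.
  destruct a, b, c, d; unfold idT, bR; simpl; field; lra.
Qed.

Lemma expT2_CPTP x : 0 <= x -> CPTP (toS (expT2 x)).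
Proof.
  intro hx. assert (h1 : decay x <= 1) by (apply exp_le_1; lra).
  assert (h2 := exp_pos (- (x * / 2))). fold (decay x) in h2. split.
  - apply (CP_two_real_Kraus (fun a c => if a then bR c else if c then 0 else decay x)
             (fun a c => bR (a && negb c)) 1 (1 - decay x * decay x)); try nra.
    intros a b c d. unfold toS, expT2. destruct a, b, c, d; unfold bR; simpl; f_equal; ring.
  - intro rho. unfold toS, expT2. unfold_qubit. apply C_ext; simpl; ring.
Qed.

(* The orthonormal traceless basis [|0><1|, |1><0|, (1+i) sz / 2]; then [sx = F 0 + F 1] and
   [sminus = F 1], so both generators have a rank-one GKSL matrix. *)
Definition Fbasis (i : nat) : M2 :=
  match i with
  | 0%nat => Eunit false true
  | 1%nat => Eunit true false
  | _ => fun a b =>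
      if Bool.eqb a b then (if a then mkC (- / 2) (- / 2) else mkC (/ 2) (/ 2)) else C0
  end.
Definition D_k1 (x : R) (i j : nat) : C := if (Nat.ltb i 2 && Nat.ltb j 2)%bool then RtoC x else C0.
Definition D_k2 (x : R) (i j : nat) : C := if (Nat.eqb i 1 && Nat.eqb j 1)%bool then RtoC x else C0.

Lemma Fbasis_traceless i : (i < 3)%nat -> Mtr (Fbasis i) = C0.
Proof. intro h. destruct i as [|[|[|]]]; try lia; unfold_qubit; apply C_ext; simpl; field. Qed.

Lemma Fbasis_orthonormal i j : (i < 3)%nat -> (j < 3)%nat ->
  Mtr (Mmul (Mdag (Fbasis i)) (Fbasis j)) = Kdelta i j.
Proof.
  intros hi hj. destruct i as [|[|[|]]]; try lia; destruct j as [|[|[|]]]; try lia;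
    unfold Kdelta; unfold_qubit; apply C_ext; simpl; field.
Qed.

Lemma hermitian_Mzero : hermitian Mzero.
Proof. intros a b. unfold_qubit. apply C_ext; simpl; ring. Qed.

Lemma Mscale_C0 X a b : Mscale C0 X a b = C0.
Proof. unfold_qubit. apply C_ext; simpl; ring. Qed.

Lemma Cadd_C0_l z : Cadd C0 z = z.
Proof. unfold_qubit. apply C_ext; simpl; ring. Qed.

Lemma Cadd_C0_r z : Cadd z C0 = z.
Proof. unfold_qubit. apply C_ext; simpl; ring. Qed.

Lemma GKSL_k1 x : 0 <= x -> GKSL (toS (scaleT x k1)).
Proof.
  intro hx. exists Mzero, Fbasis, (D_k1 x).
  split; [apply hermitian_Mzero|]. split; [apply Fbasis_traceless|].
  split; [apply Fbasis_orthonormal|]. split.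
  - intro v. cbv zeta. unfold D_k1. simpl. unfold_qubit. split; [ring|].
    match goal with |- 0 <= ?e =>
      replace e with (x * ((Re (v 0%nat) + Re (v 1%nat)) ^ 2 + (Im (v 0%nat) + Im (v 1%nat)) ^ 2))
        by ring end.
    apply Rmult_le_pos; [exact hx|]. apply Rplus_le_le_0_compat; apply pow2_ge_0.
  - intro rho. do 2 (apply functional_extensionality; intro).
    cbn [Csum D_k1 Nat.ltb Nat.leb andb]. unfold Madd at 1. cbv beta.
    rewrite ?Mscale_C0, ?Cadd_C0_l, ?Cadd_C0_r.
    unfold toS, scaleT, Fbasis, k1, flipT, idT, bR. destruct_all bool.
    all: cbv [Mscale Msub Madd Mmul Mdag Mtr Bsum Eunit acomm comm Cmul Cadd Csub Copp Cconj
              RtoC C0 C1 Ci apply Mzero Bool.eqb andb negb Re Im].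
    all: apply C_ext; cbn [Re Im]; field.
Qed.

Lemma GKSL_k2 x : 0 <= x -> GKSL (toS (scaleT x k2)).
Proof.
  intro hx. exists Mzero, Fbasis, (D_k2 x).
  split; [apply hermitian_Mzero|]. split; [apply Fbasis_traceless|].
  split; [apply Fbasis_orthonormal|]. split.
  - intro v. cbv zeta. unfold D_k2. simpl. unfold_qubit. split; [ring|].
    match goal with |- 0 <= ?e =>
      replace e with (x * (Re (v 1%nat) ^ 2 + Im (v 1%nat) ^ 2)) by ring end.
    apply Rmult_le_pos; [exact hx|]. apply Rplus_le_le_0_compat; apply pow2_ge_0.
  - intro rho. do 2 (apply functional_extensionality; intro).
    cbn [Csum D_k2 Nat.eqb andb]. unfold Madd at 1. cbv beta.
    rewrite ?Mscale_C0, ?Cadd_C0_l, ?Cadd_C0_r.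
    unfold toS, scaleT, Fbasis, k2. destruct_all bool.
    all: cbv [Mscale Msub Madd Mmul Mdag Mtr Bsum Eunit acomm comm Cmul Cadd Csub Copp Cconj
              RtoC C0 C1 Ci apply Mzero Bool.eqb andb negb Re Im].
    all: apply C_ext; cbn [Re Im]; field.
Qed.

Section SumSolution.

Variables g1 g2 G1 G2 : R -> R.
Hypothesis G1_deriv : forall x, derivable_pt_lim G1 x (g1 x).
Hypothesis G2_deriv : forall x, derivable_pt_lim G2 x (g2 x).
Hypothesis g1_cont : forall x, continuity_pt g1 x.
Hypothesis G1_0 : G1 0 = 0.
Hypothesis G2_0 : G2 0 = 0.

(* The populations obey [p' = - (2 g1 + g2) p + g1] (variation of constants with [A = 2 G1 + G2]),
   the coherence sum and difference decay with rates [g2/2] and [2 g1 + g2/2]. *)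
Definition pop_rate t := 2 * G1 t + G2 t.
Definition pop_relax t := exp (- pop_rate t).
Definition pop_gain t := pop_relax t * RInt (fun s => g1 s * exp (pop_rate s)) 0 t.
Definition coh_plus t := exp (- (G2 t * / 2)).
Definition coh_minus t := exp (- (2 * G1 t + G2 t * / 2)).

Definition sum_prop (t : R) : Rtab := fun a b c d =>
  match a, b, c, d with
  | false, false, false, false => pop_relax t + pop_gain t
  | true, true, false, false => 1 - (pop_relax t + pop_gain t)
  | false, false, true, true => pop_gain t
  | true, true, true, true => 1 - pop_gain t
  | false, true, false, true => / 2 * (coh_plus t + coh_minus t)
  | true, false, false, true => / 2 * (coh_plus t - coh_minus t)
  | false, true, true, false => / 2 * (coh_plus t - coh_minus t)
  | true, false, true, false => / 2 * (coh_plus t + coh_minus t)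
  | _, _, _, _ => 0 end.

Lemma pop_rate_deriv x : derivable_pt_lim pop_rate x (2 * g1 x + g2 x).
Proof.
  apply derivable_pt_lim_plus; [|apply G2_deriv].
  apply (derivable_pt_lim_scal G1 2), G1_deriv.
Qed.

Lemma pop_relax_deriv x : derivable_pt_lim pop_relax x (- (2 * g1 x + g2 x) * pop_relax x).
Proof. apply derivable_pt_lim_exp_opp, pop_rate_deriv. Qed.

Lemma pop_gain_deriv x :
  derivable_pt_lim pop_gain x (- (2 * g1 x + g2 x) * pop_gain x + g1 x).
Proof.
  assert (Hc : forall y, continuity_pt (fun s => g1 s * exp (pop_rate s)) y).
  { intro y. apply continuity_pt_mult; [apply g1_cont|].
    apply (continuity_pt_comp pop_rate exp).
    - apply (continuity_pt_of_derivable _ _ y pop_rate_deriv).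
    - apply derivable_continuous_pt, derivable_pt_exp. }
  assert (HI : derivable_pt_lim (fun t => RInt (fun s => g1 s * exp (pop_rate s)) 0 t) x
                 (g1 x * exp (pop_rate x))).
  { apply is_derive_Reals.
    apply (@is_derive_RInt R_CompleteNormedModule (fun s => g1 s * exp (pop_rate s))
             (fun b => RInt (fun s => g1 s * exp (pop_rate s)) 0 b) 0 x).
    - apply filter_forall. intro b. apply (@RInt_correct R_CompleteNormedModule).
      apply ex_RInt_continuous. intros y _. apply continuity_pt_filterlim, Hc.
    - apply continuity_pt_filterlim, Hc. }
  unfold pop_gain. eapply derivable_pt_lim_replace.
  - apply derivable_pt_lim_mul; [apply pop_relax_deriv | apply HI].
  - unfold pop_relax. rewrite exp_Ropp. assert (h := exp_pos (pop_rate x)). field. lra.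
Qed.

Lemma coh_plus_deriv x : derivable_pt_lim coh_plus x (- (g2 x * / 2) * coh_plus x).
Proof.
  apply derivable_pt_lim_exp_opp.
  eapply derivable_pt_lim_replace.
  - apply derivable_pt_lim_mul; [apply G2_deriv | apply derivable_pt_lim_const].
  - cbv beta; ring.
Qed.

Lemma coh_minus_deriv x :
  derivable_pt_lim coh_minus x (- (2 * g1 x + g2 x * / 2) * coh_minus x).
Proof.
  apply derivable_pt_lim_exp_opp. eapply derivable_pt_lim_replace.
  - apply derivable_pt_lim_plus; apply derivable_pt_lim_mul;
      (apply derivable_pt_lim_const || apply G1_deriv || apply G2_deriv).
  - cbv beta; ring.
Qed.

Lemma sum_prop_0 a b c d : sum_prop 0 a b c d = idT a b c d.
Proof.
  assert (r0 : pop_relax 0 = 1)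
    by (unfold pop_relax, pop_rate; rewrite G1_0, G2_0, <- exp_0; f_equal; ring).
  assert (g0 : pop_gain 0 = 0) by (unfold pop_gain; rewrite RInt_point; apply Rmult_0_r).
  assert (p0 : coh_plus 0 = 1) by (unfold coh_plus; rewrite G2_0, <- exp_0; f_equal; ring).
  assert (m0 : coh_minus 0 = 1) by (unfold coh_minus; rewrite G1_0, G2_0, <- exp_0; f_equal; ring).
  destruct a, b, c, d; unfold sum_prop, idT, bR; simpl; rewrite ?r0, ?g0, ?p0, ?m0; field.
Qed.

Lemma sum_prop_deriv t a b c d :
  derivable_pt_lim (fun s => sum_prop s a b c d) t
    (Rcomp (addT (scaleT (g1 t) k1) (scaleT (g2 t) k2)) (sum_prop t) a b c d).
Proof.
  destruct a, b, c, d;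
    cbv [sum_prop Rcomp sum2 addT scaleT k1 k2 flipT idT bR Bool.eqb andb negb];
    (eapply derivable_pt_lim_replace;
       [ first [ apply derivable_pt_lim_const
               | apply pop_gain_deriv
               | apply derivable_pt_lim_plus; [apply pop_relax_deriv | apply pop_gain_deriv]
               | apply derivable_pt_lim_minus; [apply derivable_pt_lim_const | apply pop_gain_deriv]
               | apply derivable_pt_lim_minus; [apply derivable_pt_lim_const |
                   apply derivable_pt_lim_plus; [apply pop_relax_deriv | apply pop_gain_deriv]]
               | apply (derivable_pt_lim_scal (fun s => coh_plus s + coh_minus s));
                   apply derivable_pt_lim_plus; [apply coh_plus_deriv | apply coh_minus_deriv]
               | apply (derivable_pt_lim_scal (fun s => coh_plus s - coh_minus s));
                   apply derivable_pt_lim_minus; [apply coh_plus_deriv | apply coh_minus_deriv] ]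
       | ]); field.
Qed.

Lemma solves_sum : solves (Lsum (L1 g1) (L2 g2)) (fun t => toS (sum_prop t)).
Proof. rewrite Lsum_L1_L2. apply solves_toS; [apply sum_prop_0 | apply sum_prop_deriv]. Qed.

End SumSolution.

Section SumComponents.

Variables (g1 g2 : R -> R) (Lam : R -> Sop).
Hypothesis Lam_solves : solves (Lsum (L1 g1) (L2 g2)) Lam.

Let Lam_solves_toS :
  solves (fun t => toS (addT (scaleT (g1 t) k1) (scaleT (g2 t) k2))) Lam.
Proof. rewrite <- Lsum_L1_L2. exact Lam_solves. Qed.

Lemma sum_Re_0 a b c d : Re (Lam 0 a b c d) = idT a b c d.
Proof. exact (solves_Re_0 _ _ Lam_solves_toS a b c d). Qed.

Lemma sum_Re_deriv t a b c d :
  derivable_pt_lim (fun s => Re (Lam s a b c d)) t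
    (sum2 (fun e f => (g1 t * k1 a b e f + g2 t * k2 a b e f) * Re (Lam t e f c d))).
Proof. exact (solves_Re_deriv _ _ Lam_solves_toS t a b c d). Qed.

Lemma sum_pop0_deriv c d t :
  derivable_pt_lim (fun s => Re (Lam s false false c d)) t
    (- (g1 t + g2 t) * Re (Lam t false false c d) + g1 t * Re (Lam t true true c d)).
Proof.
  eapply derivable_pt_lim_replace; [apply sum_Re_deriv|].
  cbv [sum2 k1 k2 flipT idT bR Bool.eqb andb negb]. ring.
Qed.

Lemma sum_coh01_deriv c d t :
  derivable_pt_lim (fun s => Re (Lam s false true c d)) t
    (- (g1 t + / 2 * g2 t) * Re (Lam t false true c d) + g1 t * Re (Lam t true false c d)).
Proof.
  eapply derivable_pt_lim_replace; [apply sum_Re_deriv|].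
  cbv [sum2 k1 k2 flipT idT bR Bool.eqb andb negb]. ring.
Qed.

Lemma sum_coh10_deriv c d t :
  derivable_pt_lim (fun s => Re (Lam s true false c d)) t
    (g1 t * Re (Lam t false true c d) - (g1 t + / 2 * g2 t) * Re (Lam t true false c d)).
Proof.
  eapply derivable_pt_lim_replace; [apply sum_Re_deriv|].
  cbv [sum2 k1 k2 flipT idT bR Bool.eqb andb negb]. ring.
Qed.

Lemma sum_pop_trace c t :
  Re (Lam t false false c c) + Re (Lam t true true c c) = 1.
Proof.
  transitivity (Re (Lam 0 false false c c) + Re (Lam 0 true true c c)).
  - apply (derivable_pt_lim_0_const
             (fun s => Re (Lam s false false c c) + Re (Lam s true true c c))).
    intro x. eapply derivable_pt_lim_replace.
    + apply derivable_pt_lim_plus; apply sum_Re_deriv.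
    + cbv [sum2 k1 k2 flipT idT bR Bool.eqb andb negb]. ring.
  - rewrite !sum_Re_0. destruct c; unfold idT, bR; simpl; ring.
Qed.

End SumComponents.

(* For [i, j < 2], [maxent_block i j = |i><j|]: the blocks of the projector onto [|00> + |11>],
   which [id (x) S] maps to the Choi matrix of [S]. *)
Definition maxent_block (i j : nat) : M2 := Eunit (Nat.eqb i 1) (Nat.eqb j 1).

Lemma maxent_block_PSD : blockPSD 2 maxent_block.
Proof.
  intro v. cbv zeta. unfold maxent_block. unfold_qubit. split; [ring|].
  match goal with |- 0 <= ?e =>
    replace e with ((Re (v 0%nat false) + Re (v 1%nat true)) ^ 2
                    + (Im (v 0%nat false) + Im (v 1%nat true)) ^ 2) by ring end.
  apply Rplus_le_le_0_compat; apply pow2_ge_0.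
Qed.

Lemma not_CP_of_Choi_form (S : Sop) (y : R) :
  Re (S false false false false) + y * Re (S false true false true)
    + y * Re (S true false true false) + y * y * Re (S true true true true) < 0 ->
  ~ CP S.
Proof.
  intros Hneg HCP.
  destruct (HCP 2%nat maxent_block maxent_block_PSD
              (fun (i : nat) (a : bool) =>
                 if Nat.eqb i 1 then (if a then RtoC y else C0) else (if a then C0 else C1)))
    as [_ Hnn].
  revert Hnn. cbv zeta. unfold maxent_block. unfold_qubit.
  match goal with |- 0 <= ?e -> _ => replace e with
    (Re (S false false false false) + y * Re (S false true false true)
     + y * Re (S true false true false) + y * y * Re (S true true true true)) by ring end.
  lra.
Qed.

Lemma PI_gt_3 : 3 < PI.
Proof. generalize PI2_3_2. lra. Qed.

(* [P t = Re (Lam t)_{00,00}] solves [P' = - (1 + 2 sin 2t) P + sin 2t].  With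
   [E t = exp (t + 1 - cos 2t)] we get [(P E - E/2)' = - E/2 <= - exp t (2 - cos 2t) / 2]
   by [exp u >= 1 + u], and integrating up to [PI] gives [P PI exp PI <= 7/5 - 2/5 exp PI < 0]. *)
Lemma caseA_not_CP Lam :
  solves (Lsum (L1 (fun t => sin (2 * t))) (L2 (fun _ => 1))) Lam -> ~ CP (Lam PI).
Proof.
  intro H. apply (not_CP_of_Choi_form _ 0).
  set (P := fun s => Re (Lam s false false false false)).
  assert (dP : forall x, derivable_pt_lim P x (- (1 + 2 * sin (2 * x)) * P x + sin (2 * x))).
  { intro x. eapply derivable_pt_lim_replace; [apply (sum_pop0_deriv _ _ _ H)|].
    assert (Htr := sum_pop_trace _ _ _ H false x). fold (P x) in Htr |- *.
    replace (Re (Lam x true true false false)) with (1 - P x) by lra. ring. }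
  set (E := fun x => exp (x + 1 - cos (2 * x))).
  assert (dE : forall x, derivable_pt_lim E x ((1 + 2 * sin (2 * x)) * E x)).
  { intro x. unfold E. apply is_derive_Reals. auto_derive; [auto | unfold Rminus; ring]. }
  set (Gf := fun x => exp x * (2 - (cos (2 * x) + 2 * sin (2 * x)) / 5)).
  assert (dG : forall x, derivable_pt_lim Gf x (exp x * (2 - cos (2 * x)))).
  { intro x. unfold Gf. apply is_derive_Reals. auto_derive; [auto | field]. }
  set (h := fun x => P x * E x - / 2 * E x + / 2 * Gf x).
  assert (dh : forall x, derivable_pt_lim h x (/ 2 * (exp x * (2 - cos (2 * x)) - E x))).
  { intro x. eapply derivable_pt_lim_replace.
    - apply derivable_pt_lim_plus; [apply derivable_pt_lim_minus|].
      + apply derivable_pt_lim_mul; [apply dP | apply dE].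
      + apply (derivable_pt_lim_scal E (/ 2)), dE.
      + apply (derivable_pt_lim_scal Gf (/ 2)), dG.
    - cbv beta; field. }
  assert (Hh : h PI <= h 0).
  { apply (derivable_pt_lim_nonpos_decreasing h _ 0 PI dh); [|generalize PI_RGT_0; lra].
    intros x _. unfold E.
    replace (x + 1 - cos (2 * x)) with (x + (1 - cos (2 * x))) by ring. rewrite exp_plus.
    assert (Hexp := exp_ineq1_le (1 - cos (2 * x))). assert (Hx := exp_pos x).
    assert (exp x * (1 + (1 - cos (2 * x))) <= exp x * exp (1 - cos (2 * x)))
      by (apply Rmult_le_compat_l; lra).
    lra. }
  assert (P0 : P 0 = 1) by (unfold P; rewrite (sum_Re_0 _ _ _ H); reflexivity).
  unfold h, Gf, E in Hh. rewrite P0, Rmult_0_r, cos_0, sin_0, exp_0, cos_2PI, sin_2PI in Hh.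
  replace (0 + 1 - 1) with 0 in Hh by ring. replace (PI + 1 - 1) with PI in Hh by ring.
  rewrite exp_0 in Hh.
  assert (He : 4 < exp PI).
  { generalize (exp_ineq1 PI) PI_gt_3. intros Hi Hp. specialize (Hi ltac:(lra)). lra. }
  assert (Hneg : P PI * exp PI < 0) by lra.
  fold (P PI). replace (P PI + _ + _ + _) with (P PI) by ring.
  destruct (Rlt_or_le (P PI) 0) as [|Hp]; [assumption|].
  assert (0 <= P PI * exp PI) by (apply Rmult_le_pos; [|left; apply exp_pos]; lra). lra.
Qed.

Lemma cos_lt_1 x : 0 < x < 2 * PI -> cos x < 1.
Proof.
  intro hx. replace x with (2 * (x / 2)) by field. rewrite cos_2a_sin.
  assert (0 < sin (x / 2)) by (apply sin_gt_0; lra). nra.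
Qed.

Lemma Choi_quadratic_neg p r :
  p <> r -> r < 2 ->
  let y := -1 + (r - p) / 2 in p + y * ((p + r) / 2) + y * ((p + r) / 2) + y * y * r < 0.
Proof.
  intros hpr hr y.
  replace (p + y * ((p + r) / 2) + y * ((p + r) / 2) + y * y * r)
    with ((r - p) * (r - p) * (r - 2) / 4) by (unfold y; field).
  assert (0 < (r - p) * (r - p)) by (apply Rsqr_pos_lt; lra). nra.
Qed.

Section CaseB.

Variable Lam : R -> Sop.
Hypothesis Lam_solves : solves (Lsum (L1 (fun _ => / 2)) (L2 (fun t => sin t))) Lam.

Let e := exp (- (2 * PI)).

Lemma exp_m2PI_bounds : 0 < e < 1.
Proof.
  split; [apply exp_pos|]. rewrite <- exp_0. apply exp_increasing. generalize PI_RGT_0. lra.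
Qed.

Lemma exp_2PI_mul_e : exp (2 * PI) * e = 1.
Proof. unfold e. rewrite <- exp_plus, Rplus_opp_r. apply exp_0. Qed.

Lemma caseB_pop_deriv c t :
  derivable_pt_lim (fun s => Re (Lam s false false c c)) t
    (- (1 + sin t) * Re (Lam t false false c c) + / 2).
Proof.
  eapply derivable_pt_lim_replace; [apply (sum_pop0_deriv _ _ _ Lam_solves)|].
  assert (Htr := sum_pop_trace _ _ _ Lam_solves c t).
  replace (Re (Lam t true true c c)) with (1 - Re (Lam t false false c c)) by lra. field.
Qed.

Lemma caseB_pop_gap :
  Re (Lam (2 * PI) false false false false) - Re (Lam (2 * PI) false false true true) = e.
Proof.
  set (f := fun s => Re (Lam s false false false false) - Re (Lam s false false true true)).
  assert (H : f (2 * PI) * exp (2 * PI + (1 - cos (2 * PI))) = f 0 * exp (0 + (1 - cos 0))).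
  { apply (integrating_factor f (fun s => 1 + sin s) (fun s => s + (1 - cos s))).
    - intro x. eapply derivable_pt_lim_replace.
      + apply derivable_pt_lim_minus; apply caseB_pop_deriv.
      + unfold f. ring.
    - intro x. apply is_derive_Reals. auto_derive; [auto | ring]. }
  assert (f0 : f 0 = 1).
  { unfold f. rewrite !(sum_Re_0 _ _ _ Lam_solves). unfold idT, bR; simpl; ring. }
  rewrite f0, cos_0, cos_2PI, Rminus_diag, Rplus_0_r, Rplus_0_r, exp_0 in H.
  fold (f (2 * PI)). unfold e. rewrite exp_Ropp. assert (Hpos := exp_pos (2 * PI)).
  apply (Rmult_eq_reg_r (exp (2 * PI))); [rewrite H; field; lra | lra].
Qed.

(* [Z t exp (t + 1 - cos t) - exp t / 2] increases, with derivative
   [exp t (exp (1 - cos t) - 1) / 2]. *)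
Lemma caseB_pop1_lower : (1 - e) / 2 < Re (Lam (2 * PI) false false true true).
Proof.
  set (Z := fun s => Re (Lam s false false true true)).
  set (h := fun x => Z x * exp (x + (1 - cos x)) - / 2 * exp x).
  assert (dh : forall x, derivable_pt_lim h x (/ 2 * (exp (x + (1 - cos x)) - exp x))).
  { intro x. eapply derivable_pt_lim_replace.
    - apply derivable_pt_lim_minus.
      + apply derivable_pt_lim_mul; [apply caseB_pop_deriv|].
        apply (derivable_pt_lim_compose exp (fun x => x + (1 - cos x))).
        * apply is_derive_Reals. auto_derive; [auto | reflexivity].
        * apply derivable_pt_lim_exp.
      + apply (derivable_pt_lim_scal exp (/ 2)), derivable_pt_lim_exp.
    - fold (Z x). cbv beta. field. }
  assert (Hh : h 0 < h (2 * PI)).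
  { apply (derivable_pt_lim_pos_increasing h _ 0 (2 * PI) dh); [|generalize PI_RGT_0; lra].
    intros x hx. rewrite exp_plus.
    assert (exp 0 < exp (1 - cos x)) by (apply exp_increasing; generalize (cos_lt_1 x hx); lra).
    rewrite exp_0 in *. assert (Hx := exp_pos x). nra. }
  assert (Z0 : Z 0 = 0) by (unfold Z; rewrite (sum_Re_0 _ _ _ Lam_solves); reflexivity).
  unfold h in Hh. rewrite Z0, cos_0, cos_2PI, Rminus_diag, Rplus_0_r, Rplus_0_r, exp_0 in Hh.
  fold (Z (2 * PI)). assert (He := exp_2PI_mul_e). assert (Hpos := exp_m2PI_bounds). nra.
Qed.

(* The sum and difference of the two coherences decay at rates [sin t / 2] and
   [1 + sin t / 2]; only the latter has a nonzero mean over a period. *)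
Lemma caseB_coherences c d :
  let X s := Re (Lam s false true c d) in
  let Y s := Re (Lam s true false c d) in
  X (2 * PI) = / 2 * (X 0 + Y 0 + e * (X 0 - Y 0)) /\
  Y (2 * PI) = / 2 * (X 0 + Y 0 - e * (X 0 - Y 0)).
Proof.
  intros X Y.
  assert (Hsum : (X (2 * PI) + Y (2 * PI)) * exp (/ 2 * (1 - cos (2 * PI)))
                 = (X 0 + Y 0) * exp (/ 2 * (1 - cos 0))).
  { apply (integrating_factor (fun s => X s + Y s) (fun s => / 2 * sin s)
             (fun s => / 2 * (1 - cos s))).
    - intro x. eapply derivable_pt_lim_replace.
      + apply derivable_pt_lim_plus;
          [apply (sum_coh01_deriv _ _ _ Lam_solves) | apply (sum_coh10_deriv _ _ _ Lam_solves)].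
      + unfold X, Y. ring.
    - intro x. apply is_derive_Reals. auto_derive; [auto | ring]. }
  assert (Hdiff : (X (2 * PI) - Y (2 * PI)) * exp (2 * PI + / 2 * (1 - cos (2 * PI)))
                  = (X 0 - Y 0) * exp (0 + / 2 * (1 - cos 0))).
  { apply (integrating_factor (fun s => X s - Y s) (fun s => 1 + / 2 * sin s)
             (fun s => s + / 2 * (1 - cos s))).
    - intro x. eapply derivable_pt_lim_replace.
      + apply derivable_pt_lim_minus;
          [apply (sum_coh01_deriv _ _ _ Lam_solves) | apply (sum_coh10_deriv _ _ _ Lam_solves)].
      + unfold X, Y. field.
    - intro x. apply is_derive_Reals. auto_derive; [auto | ring]. }
  rewrite cos_0, cos_2PI, Rminus_diag, Rmult_0_r, exp_0 in Hsum.
  rewrite cos_0, cos_2PI, Rminus_diag, Rmult_0_r, !Rplus_0_r, exp_0 in Hdiff.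
  assert (He := exp_2PI_mul_e).
  assert (Hdiff' : X (2 * PI) - Y (2 * PI) = e * (X 0 - Y 0)).
  { rewrite Rmult_1_r in Hdiff. rewrite <- Hdiff.
    transitivity ((X (2 * PI) - Y (2 * PI)) * (exp (2 * PI) * e)); [rewrite He|]; ring. }
  split; lra.
Qed.

Lemma caseB_not_CP : ~ CP (Lam (2 * PI)).
Proof.
  set (p := Re (Lam (2 * PI) false false false false)).
  set (z := Re (Lam (2 * PI) false false true true)).
  set (r := Re (Lam (2 * PI) true true true true)).
  assert (Hr : r = 1 - z)
    by (generalize (sum_pop_trace _ _ _ Lam_solves true (2 * PI)); unfold r, z; lra).
  assert (Hp : p = z + e) by (generalize caseB_pop_gap; unfold p, z; lra).
  assert (Hz := caseB_pop1_lower). fold z in Hz. assert (He := exp_m2PI_bounds).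
  destruct (caseB_coherences false true) as [H01 _].
  destruct (caseB_coherences true false) as [_ H10].
  rewrite !(sum_Re_0 _ _ _ Lam_solves) in H01, H10. unfold idT, bR in H01, H10; simpl in H01, H10.
  apply (not_CP_of_Choi_form _ (-1 + (r - p) / 2)). fold p r.
  replace (Re (Lam (2 * PI) false true false true)) with ((p + r) / 2) by lra.
  replace (Re (Lam (2 * PI) true false true false)) with ((p + r) / 2) by lra.
  apply Choi_quadratic_neg; lra.
Qed.

End CaseB.

Lemma SSC_CPTP_L1 (g G : R -> R) :
  (forall x, derivable_pt_lim G x (g x)) -> (forall x, continuity_pt g x) ->
  G 0 = 0 -> (forall t, 0 <= t -> 0 <= G t) -> SSC_CPTP (L1 g).
Proof.
  intros. rewrite L1_fun.
  apply (SSC_CPTP_scalar k1 expT1 expT1_0 expT1_deriv expT1_comm expT1_inv g G);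
    auto using GKSL_k1, expT1_CPTP.
Qed.

Lemma SSC_CPTP_L2 (g G : R -> R) :
  (forall x, derivable_pt_lim G x (g x)) -> (forall x, continuity_pt g x) ->
  G 0 = 0 -> (forall t, 0 <= t -> 0 <= G t) -> SSC_CPTP (L2 g).
Proof.
  intros. rewrite L2_fun.
  apply (SSC_CPTP_scalar k2 expT2 expT2_0 expT2_deriv expT2_comm expT2_inv g G);
    auto using GKSL_k2, expT2_CPTP.
Qed.

Lemma one_minus_cos_deriv x : derivable_pt_lim (fun t => 1 - cos t) x (sin x).
Proof. apply is_derive_Reals. auto_derive; [auto | ring]. Qed.

Lemma half_one_minus_cos2_deriv x :
  derivable_pt_lim (fun t => / 2 * (1 - cos (2 * t))) x (sin (2 * x)).
Proof. apply is_derive_Reals. auto_derive; [auto | field]. Qed.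

Lemma half_id_deriv x : derivable_pt_lim (fun t => / 2 * t) x (/ 2).
Proof. apply is_derive_Reals. auto_derive; [auto | ring]. Qed.

Lemma continuity_pt_sin2 x : continuity_pt (fun t => sin (2 * t)) x.
Proof.
  apply (continuity_pt_of_derivable _ (fun t => 2 * cos (2 * t))).
  intro y. apply is_derive_Reals. auto_derive; [auto | ring].
Qed.

Theorem mainTheorem3 :
  (* (a) gamma_1(t) = sin(2t), gamma_2(t) = 1 *)
  (SSC_CPTP (L1 (fun t => sin (2 * t))) /\
   SSC_CPTP (L2 (fun _ => 1)) /\
   (exists Lam, solves (Lsum (L1 (fun t => sin (2 * t))) (L2 (fun _ => 1))) Lam) /\
   (forall Lam, solves (Lsum (L1 (fun t => sin (2 * t))) (L2 (fun _ => 1))) Lam ->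
      ~ CP (Lam PI))) /\
  (* (b) gamma_1(t) = 1/2, gamma_2(t) = sin t *)
  (SSC_CPTP (L1 (fun _ => / 2)) /\
   SSC_CPTP (L2 (fun t => sin t)) /\
   (exists Lam, solves (Lsum (L1 (fun _ => / 2)) (L2 (fun t => sin t))) Lam) /\
   (forall Lam, solves (Lsum (L1 (fun _ => / 2)) (L2 (fun t => sin t))) Lam ->
      ~ CP (Lam (2 * PI)))).
Proof.
  assert (Ga1_0 : / 2 * (1 - cos (2 * 0)) = 0) by (rewrite Rmult_0_r, cos_0; ring).
  assert (Gb2_0 : 1 - cos 0 = 0) by (rewrite cos_0; ring).
  split; [split; [|split; [|split]] | split; [|split; [|split]]].
  - apply (SSC_CPTP_L1 _ _ half_one_minus_cos2_deriv continuity_pt_sin2 Ga1_0).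
    intros t _. generalize (COS_bound (2 * t)). lra.
  - apply (SSC_CPTP_L2 _ _ derivable_pt_lim_id (continuity_pt_cst 1)); [reflexivity | auto].
  - eexists. apply (solves_sum _ _ _ _ half_one_minus_cos2_deriv derivable_pt_lim_id
                      continuity_pt_sin2 Ga1_0 eq_refl).
  - apply caseA_not_CP.
  - apply (SSC_CPTP_L1 _ _ half_id_deriv (continuity_pt_cst _)); [ring | intros; lra].
  - apply (SSC_CPTP_L2 _ _ one_minus_cos_deriv continuity_sin Gb2_0).
    intros t _. generalize (COS_bound t). lra.
  - eexists. apply (solves_sum _ _ _ _ half_id_deriv one_minus_cos_deriv (continuity_pt_cst _));
      [ring | exact Gb2_0].
  - apply caseB_not_CP.
Qed.
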